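(* In the two-period difference-in-differences setting with anticipation described in the context, suppose: (i) $\{Y_{i0}(0,1),Y_{i0}(1,1),Y_{i0}(0),Y_{i1}(0),Y_{i1}(1),D_i,A_i\}_{i=1}^n$ are i.i.d. across $i$; (ii) $Y_{i0}(0)=Y_{i0}(0,1)$; (iii) $\mathbb{E}[g(Y_{i1}(0))-g(Y_{i0}(0))\mid D_i=1]=\mathbb{E}[g(Y_{i1}(0))-g(Y_{i0}(0))\mid D_i=0]$; (iv) $\mathbb{E}[g(Y_{i0}(0,0))\mid D_i=1,A_i=0]=\mathbb{E}[g(Y_{i0}(0,0))\mid D_i=1,A_i=1]$; (v) $g(Y_{i0})\in[a,b]$. Then $\mu_g$ is partially identified in the closed interval $[\mu_{g,l},\mu_{g,u}]$, where \[\mu_{g,l}=\mathbb{E}\left[\frac{D_i-\mathbb{P}[D_i=1]}{\mathbb{P}[D_i=1](1-\mathbb{P}[D_i=1])}g(Y_{i1})+\frac{1-D_i}{1-\mathbb{P}[D_i=1]}g(Y_{i0})-b\right],\] \[\mu_{g,u}=\mathbb{E}\left[\frac{D_i-\mathbb{P}[D_i=1]}{\mathbb{P}[D_i=1](1-\mathbb{P}[D_i=1])}g(Y_{i1})+\frac{1-D_i}{1-\mathbb{P}[D_i=1]}g(Y_{i0})-a\right].\]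
   Context: Two periods $t\in\{0,1\}$, units $i=1,\dots,n$, observed binary treatment $D_i$ (applied in period 1) with $0<\mathbb{P}[D_i=1]<1$, unobserved binary anticipation status $A_i$ in period 0. Potential outcomes $Y_{i1}(d)$, $d\in\{0,1\}$; $Y_{i0}(0)$ (also written $Y_{i0}(0,0)$) the period-0 outcome without anticipation or treatment; $Y_{i0}(a,1)$ the period-0 outcome of a unit to be treated with anticipation status $a$. Observed: $Y_{i1}=D_iY_{i1}(1)+(1-D_i)Y_{i1}(0)$, $Y_{i0}=(1-D_i)Y_{i0}(0)+D_i[(1-A_i)Y_{i0}(0,1)+A_iY_{i0}(1,1)]$. $g$ is a known measurable real function with finite expectations; $a\le b$ are real constants. $\mu_g=\mathbb{E}[g(Y_{i1}(1))-g(Y_{i1}(0))\mid D_i=1]$. *)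

From HB Require Import structures.
From mathcomp Require Import all_boot all_order all_algebra.
From mathcomp Require Import all_classical all_reals all_analysis.
Set Implicit Arguments. Unset Strict Implicit. Unset Printing Implicit Defensive.
Import Order.TTheory GRing.Theory Num.Theory.
Local Open Scope classical_set_scope.
Local Open Scope ring_scope.

Definition Ex {d} {T : measurableType d} {R : realType} (P : probability T R)
  (X : T -> R) : R := fine (\int[P]_x (X x)%:E).

Definition prob {d} {T : measurableType d} {R : realType} (P : probability T R)
  (B : set T) : R := fine (P B).

Definition condE {d} {T : measurableType d} {R : realType} (P : probability T R)
  (X : T -> R) (B : set T) : R := Ex P (fun x => X x * \1_B x) / prob P B.

From HB Require Import structures.
From mathcomp Require Import all_boot all_order all_algebra.
From mathcomp Require Import all_classical all_reals all_analysis.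
From mathcomp Require Import ring lra.
Set Implicit Arguments.
Unset Strict Implicit.
Unset Printing Implicit Defensive.

Import Order.TTheory GRing.Theory Num.Theory.
Local Open Scope classical_set_scope.
Local Open Scope ring_scope.

(* The weighted expectation E[W] appearing in both bounds equals
   E[g(Y_1) | D = 1] - E[g(Y_1) - g(Y_0) | D = 0].  On each group the observed
   outcomes are the relevant potential outcomes, so this is
   E[g(Y_1(1)) | D = 1] - E[g(Y_1(0)) - g(Y_0(0)) | D = 0], and parallel trends
   moves the second conditioning to D = 1: E[W] = mu_g + E[g(Y_0(0)) | D = 1].
   By (iv) the last term is E[g(Y_0(0)) | D = 1, A = 0], and on that event the
   observed period-0 outcome is Y_0(0,1) = Y_0(0), so by (v) it lies in [a, b]. *)

Section conditional_expectation.
Context d (T : measurableType d) (R : realType) {P : probability T R}.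
Implicit Types (B C : set T) (X Y U V : T -> R).

Lemma integrableU B C (f : T -> \bar R) : measurable B -> measurable C ->
  [disjoint B & C] -> P.-integrable B f -> P.-integrable C f ->
  P.-integrable (B `|` C) f.
Proof.
move=> mB mC /disj_setPLR BC /(integrable_mkcond f mB) iB.
move=> /(integrable_mkcond f mC) iC.
apply/(integrable_mkcond f (measurableU _ _ mB mC)).
have -> : f \_ (B `|` C) = f \_ B \+ f \_ C.
  apply/funext => x; rewrite /= !patchE in_setU.
  have [xB|_] := boolP (x \in B); last by rewrite add0e.
  by rewrite (memNset (BC _ (set_mem xB))) adde0.
exact: integrableD.
Qed.

Lemma integrableB_EFin B X Y : measurable B ->
  P.-integrable B (EFin \o X) -> P.-integrable B (EFin \o Y) ->
  P.-integrable B (EFin \o (fun x => X x - Y x)).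
Proof.
move=> mB iX iY; apply: eq_integrable mB _ _ _ (integrableB mB iX iY) => x _.
by rewrite /= EFinB.
Qed.

Lemma integrableZl_EFin B X k : measurable B ->
  P.-integrable B (EFin \o X) -> P.-integrable B (EFin \o (fun x => k * X x)).
Proof.
move=> mB iX; apply: eq_integrable mB _ _ _ (integrableZl mB k iX) => x _.
by rewrite /= EFinM.
Qed.

Lemma eq_integrableS B X Y : measurable B -> {in B, X =1 Y} ->
  P.-integrable setT (EFin \o Y) -> P.-integrable B (EFin \o X).
Proof.
move=> mB XY iY.
apply: (eq_integrable mB (EFin \o Y)); last exact: integrableS iY.
by move=> x xB; rewrite /= XY.
Qed.

Lemma prob_setC B : measurable B -> prob P (~` B) = 1 - prob P B.
Proof.
by move=> mB; rewrite /prob probability_setC // fineB ?fin_num_measure.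
Qed.

Lemma prob_setU B C : measurable B -> measurable C -> [disjoint B & C] ->
  prob P (B `|` C) = prob P B + prob P C.
Proof.
by move=> mB mC /disj_set2P BC; rewrite /prob measureU // fineD ?fin_num_measure.
Qed.

Lemma condE_Rintegral X B : condE P X B = (\int[P]_(x in B) X x) / prob P B.
Proof.
rewrite /condE Rintegral_mkcond; congr (_ / _); apply: eq_Rintegral => x _.
by rewrite patchE indicE; case: (x \in B); rewrite ?mulr1 ?mulr0.
Qed.

Lemma eq_condE X Y B : {in B, X =1 Y} -> condE P X B = condE P Y B.
Proof. by move=> XY; rewrite !condE_Rintegral (eq_Rintegral _ XY). Qed.

Lemma condEB X Y B : measurable B ->
  P.-integrable B (EFin \o X) -> P.-integrable B (EFin \o Y) ->
  condE P (fun x => X x - Y x) B = condE P X B - condE P Y B.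
Proof. by move=> mB iX iY; rewrite !condE_Rintegral RintegralB // mulrBl. Qed.

Lemma condE_itv X B a b : measurable B -> 0 < prob P B ->
  P.-integrable B (EFin \o X) -> (forall x, B x -> a <= X x <= b) ->
  a <= condE P X B <= b.
Proof.
move=> mB pB iX abX; rewrite condE_Rintegral ler_pdivlMr // ler_pdivrMr //.
have cstE k : k * prob P B = \int[P]_(_ in B) k by rewrite Rintegral_cst.
rewrite !cstE; apply/andP; split; apply: le_Rintegral => //;
  do ?exact: finite_measure_integrable_cst; by move=> x /abX /andP[].
Qed.

Lemma condE_setU X B C : measurable B -> measurable C -> [disjoint B & C] ->
  P.-integrable (B `|` C) (EFin \o X) -> 0 < prob P B ->
  (0 < prob P C -> condE P X B = condE P X C) ->
  condE P X (B `|` C) = condE P X B.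
Proof.
move=> mB mC BC iX pB eqBC; set c := condE P X B.
have intB : \int[P]_(x in B) X x = c * prob P B.
  by rewrite /c condE_Rintegral divfK // gt_eqF.
have intC : \int[P]_(x in C) X x = c * prob P C.
  have [pC|pC] := ltP 0 (prob P C).
    by rewrite /c eqBC // condE_Rintegral divfK // gt_eqF.
  have pC0 : prob P C = 0.
    by apply/eqP; rewrite eq_le pC fine_ge0 // measure_ge0.
  have PC0 : P C = 0%E.
    by rewrite -(fineK (fin_num_measure P C mC)) -/(prob P C) pC0.
  have iXC : P.-integrable C (EFin \o X).
    by apply: integrableS iX => //; exact: measurableU.
  rewrite /Rintegral (null_set_integral mC (measurable_int _ iXC) PC0).
  by rewrite pC0 mulr0.
have pBC : prob P B + prob P C != 0.
  by rewrite gt_eqF // ltr_wpDr // fine_ge0 // measure_ge0.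
by rewrite condE_Rintegral Rintegral_setU // intB intC prob_setU // -mulrDr mulfK.
Qed.

Lemma condE_setID X A B : measurable A -> measurable B ->
  P.-integrable B (EFin \o X) -> 0 < prob P (B `&` ~` A) ->
  (0 < prob P (B `&` A) -> condE P X (B `&` ~` A) = condE P X (B `&` A)) ->
  condE P X B = condE P X (B `&` ~` A).
Proof.
move=> mA mB iX pBnA eqA.
rewrite -{1}(setUIDK B A) setUC setDE; apply: condE_setU => //.
- exact: measurableI _ _ mB (measurableC mA).
- exact: measurableI.
- by apply/disj_setPS => x [[_ nAx] [_ Ax]].
- by rewrite setUC setUIDK.
Qed.

Lemma Ex_ipw U V B c : measurable B -> 0 < prob P B < 1 ->
  P.-integrable B (EFin \o U) -> P.-integrable (~` B) (EFin \o U) ->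
  P.-integrable (~` B) (EFin \o V) ->
  Ex P (fun x => (\1_B x - prob P B) / (prob P B * (1 - prob P B)) * U x
                 + (1 - \1_B x) / (1 - prob P B) * V x - c)
  = condE P U B - condE P (fun x => U x - V x) (~` B) - c.
Proof.
move=> mB /andP[p0 p1] iBU iCU iCV; have mC := measurableC mB.
set p := prob P B; set W := fun x => _ - c.
have p_neq0 : p != 0 by rewrite gt_eqF.
have q_neq0 : 1 - p != 0 by rewrite subr_eq0 eq_sym lt_eqF.
have WB : {in B, W =1 fun x => p^-1 * U x - c}.
  by move=> x xB; rewrite /W indicE xB /=; field; rewrite p_neq0 q_neq0.
have WC : {in ~` B, W =1 fun x => - (1 - p)^-1 * (U x - V x) - c}.
  move=> x; rewrite in_setC => /negbTE xB.
  by rewrite /W indicE xB /=; field; rewrite p_neq0 q_neq0.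
have iUB := integrableZl_EFin p^-1 mB iBU.
have iCUV := integrableB_EFin mC iCU iCV.
have iUVC := integrableZl_EFin (- (1 - p)^-1) mC iCUV.
have icB := finite_measure_integrable_cst P c mB.
have icC := finite_measure_integrable_cst P c mC.
have iWB : P.-integrable B (EFin \o W).
  apply: (eq_integrable mB _ _ _ (integrableB_EFin mB iUB icB)) => x xB.
  by rewrite /= WB.
have iWC : P.-integrable (~` B) (EFin \o W).
  apply: (eq_integrable mC _ _ _ (integrableB_EFin mC iUVC icC)) => x xC.
  by rewrite /= WC.
have BBc : [disjoint B & ~` B] by apply/disj_set2P; rewrite setICr.
change (Ex P W) with (\int[P]_(x in [set: T]) W x).
rewrite -(setUv B) Rintegral_setU //; last exact: integrableU.
rewrite (eq_Rintegral _ WB) (eq_Rintegral _ WC) !RintegralB //.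
rewrite !RintegralZl // !Rintegral_cst // -/(prob P B) -/(prob P (~` B)).
rewrite !condE_Rintegral !prob_setC // -/p.
by field; rewrite p_neq0 q_neq0.
Qed.

Lemma Ex_ipw_trends U V Z11 Z10 Z00 B c : measurable B -> 0 < prob P B < 1 ->
  {in B, U =1 Z11} -> {in ~` B, U =1 Z10} -> {in ~` B, V =1 Z00} ->
  P.-integrable setT (EFin \o Z11) -> P.-integrable setT (EFin \o Z10) ->
  P.-integrable setT (EFin \o Z00) ->
  condE P (fun x => Z10 x - Z00 x) B = condE P (fun x => Z10 x - Z00 x) (~` B) ->
  Ex P (fun x => (\1_B x - prob P B) / (prob P B * (1 - prob P B)) * U x
                 + (1 - \1_B x) / (1 - prob P B) * V x - c)
  = condE P (fun x => Z11 x - Z10 x) B + condE P Z00 B - c.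
Proof.
move=> mB pB U11 U10 V00 i11 i10 i00 trends; have mC := measurableC mB.
have iUB := eq_integrableS mB U11 i11; have iUC := eq_integrableS mC U10 i10.
rewrite Ex_ipw //; last exact: eq_integrableS mC V00 i00.
rewrite (eq_condE U11).
rewrite (@eq_condE (fun x => U x - V x) (fun x => Z10 x - Z00 x)); last first.
  by move=> x xC; rewrite U10 ?V00.
have iB Z : P.-integrable setT (EFin \o Z) -> P.-integrable B (EFin \o Z).
  exact: integrableS.
by rewrite -trends !condEB //; [lra | exact: iB ..].
Qed.

End conditional_expectation.

Theorem theoremA3 (d : measure_display) (T : measurableType d) (R : realType)
  (P : probability T R) (Dset Aset : set T)
  (Y00 Y001 Y011 Y10 Y11 : T -> R) (g : R -> R) (a b : R) :
  measurable Dset -> measurable Aset ->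
  0 < prob P Dset < 1 ->
  measurable_fun setT Y00 -> measurable_fun setT Y001 ->
  measurable_fun setT Y011 -> measurable_fun setT Y10 ->
  measurable_fun setT Y11 -> measurable_fun setT g ->
  P.-integrable setT (fun x => (g (Y00 x))%:E) ->
  P.-integrable setT (fun x => (g (Y001 x))%:E) ->
  P.-integrable setT (fun x => (g (Y011 x))%:E) ->
  P.-integrable setT (fun x => (g (Y10 x))%:E) ->
  P.-integrable setT (fun x => (g (Y11 x))%:E) ->
  a <= b ->
  let Dv := \1_Dset : T -> R in
  let Av := \1_Aset : T -> R in
  let Y1 := fun x => Dv x * Y11 x + (1 - Dv x) * Y10 x in
  let Y0 := fun x => (1 - Dv x) * Y00 x
              + Dv x * ((1 - Av x) * Y001 x + Av x * Y011 x) in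
  let p := prob P Dset in
  (* (ii) *)
  (forall x, Y00 x = Y001 x) ->
  (* (iii) parallel trends *)
  condE P (fun x => g (Y10 x) - g (Y00 x)) Dset
    = condE P (fun x => g (Y10 x) - g (Y00 x)) (~` Dset) ->
  (* (iv) the conditioning events are non-null where (iv) is meaningful *)
  0 < prob P (Dset `&` ~` Aset) ->
  (0 < prob P (Dset `&` Aset) ->
   condE P (fun x => g (Y00 x)) (Dset `&` ~` Aset)
     = condE P (fun x => g (Y00 x)) (Dset `&` Aset)) ->
  (* (v) *)
  (forall x, a <= g (Y0 x) <= b) ->
  let mu_g := condE P (fun x => g (Y11 x) - g (Y10 x)) Dset in
  let mu_l := Ex P (fun x => (Dv x - p) / (p * (1 - p)) * g (Y1 x)
                             + (1 - Dv x) / (1 - p) * g (Y0 x) - b) in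
  let mu_u := Ex P (fun x => (Dv x - p) / (p * (1 - p)) * g (Y1 x)
                             + (1 - Dv x) / (1 - p) * g (Y0 x) - a) in
  mu_l <= mu_g <= mu_u.
Proof.
move=> mD mA pD _ _ _ _ _ _ i00 _ _ i10 i11 _ Dv Av Y1 Y0 p Y00E trends pDnA.
move=> iv bnd.
cbv zeta.
have gY1_D : {in Dset, (fun x => g (Y1 x)) =1 (fun x => g (Y11 x))}.
  by move=> x xD; rewrite /Y1 /Dv indicE xD /=; congr (g _); ring.
have gY1_Dc : {in ~` Dset, (fun x => g (Y1 x)) =1 (fun x => g (Y10 x))}.
  move=> x; rewrite in_setC => /negbTE xD.
  by rewrite /Y1 /Dv indicE xD /=; congr (g _); ring.
have gY0_Dc : {in ~` Dset, (fun x => g (Y0 x)) =1 (fun x => g (Y00 x))}.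
  move=> x; rewrite in_setC => /negbTE xD.
  by rewrite /Y0 /Dv indicE xD /=; congr (g _); ring.
have Y0_DnA : {in Dset `&` ~` Aset, Y0 =1 Y00}.
  move=> x; rewrite in_setI in_setC => /andP[xD /negbTE xA].
  by rewrite /Y0 /Dv /Av !indicE xD xA /= -Y00E; ring.
have mDnA := measurableI _ _ mD (measurableC mA).
have c_bound : a <= condE P (fun x => g (Y00 x)) (Dset `&` ~` Aset) <= b.
  apply: condE_itv => //; first by apply: integrableS i00.
  by move=> x xDnA; rewrite -Y0_DnA ?inE.
rewrite !(@Ex_ipw_trends _ _ _ _ _ _ (fun x => g (Y11 x)) (fun x => g (Y10 x))
  (fun x => g (Y00 x))) //.
rewrite (@condE_setID _ _ _ _ (fun x => g (Y00 x)) Aset Dset) //; last first.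
  by apply: integrableS i00.
by case/andP: c_bound => ca cb; apply/andP; split; lra.
Qed.
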